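(* Let $\mathbf{L}=(L,\le)$ be a finite nontrivial join-semilattice with greatest element $1$ and let $(R,\vee,\circ)$ be a subsemiring of $(\mathrm{JM}(\mathbf{L}),\vee,\circ)$ such that (i) $k_a\in R$ for every $a\in L$; (ii) for every $f\in R$ there exists $a\in L$ with $k_a\le f$ (pointwise); (iii) for all $a\in L$ and all $b\in L\setminus\{1\}$ there exists $f\in R$ with $f(x)=b$ whenever $x\le a$ and $f(x)>b$ otherwise. Then $(R,\vee,\circ)$ is a finite simple additively idempotent semiring whose greatest element is left but not right absorbing. Conversely, every finite simple additively idempotent semiring $(S,+,\cdot)$ with $|S|>2$ whose greatest element is left but not right absorbing is isomorphic to such a semiring $(R,\vee,\circ)$ for some such semilattice $\mathbf{L}$.
   Context: A semiring is a nonempty set with a commutative semigroup operation $+$ and a semigroup operation $\cdot$ satisfying both distributive laws. It is simple if its only congruences are the identity and the full relation; additively idempotent if $r+r=r$; then $x\le y:\Leftrightarrow x+y=y$ is a partial order, and for finite semirings the greatest element is the sum of all elements. An element $r$ is right absorbing if $sr=r$ for all $s$, left absorbing if $rs=r$ for all $s$. For a finite join-semilattice $\mathbf{L}$, $\mathrm{JM}(\mathbf{L})$ is the set of maps $f:L\to L$ with $f(x\vee y)=f(x)\vee f(y)$, a semiring under pointwise join and composition. For $a\in L$, $k_a$ is the constant map with value $a$. *)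

From HB Require Import structures.
From mathcomp Require Import all_boot all_order.
Set Implicit Arguments. Unset Strict Implicit. Unset Printing Implicit Defensive.
Import Order.TTheory.
Local Open Scope order_scope.

(* A semiring (S,+,.) whose carrier is the set of elements of T satisfying P.
   For an abstract semiring use P := fun _ => True. *)
Definition semiring_on (T : Type) (P : T -> Prop) (add mul : T -> T -> T) : Prop :=
  [/\ (exists x, P x),
      (forall x y, P x -> P y -> P (add x y) /\ P (mul x y)),
      (forall x y z, P x -> P y -> P z ->
          add (add x y) z = add x (add y z) /\ mul (mul x y) z = mul x (mul y z)),
      (forall x y, P x -> P y -> add x y = add y x) &
      (forall x y z, P x -> P y -> P z ->
          mul x (add y z) = add (mul x y) (mul x z) /\
          mul (add x y) z = add (mul x z) (mul y z))].

Definition add_idempotent_on (T : Type) (P : T -> Prop) (add : T -> T -> T) :=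
  forall x, P x -> add x x = x.

Definition congruence_on (T : Type) (P : T -> Prop) (add mul : T -> T -> T)
    (r : T -> T -> Prop) : Prop :=
  [/\ (forall x, P x -> r x x),
      (forall x y, P x -> P y -> r x y -> r y x),
      (forall x y z, P x -> P y -> P z -> r x y -> r y z -> r x z) &
      (forall a b c d, P a -> P b -> P c -> P d -> r a b -> r c d ->
          r (add a c) (add b d) /\ r (mul a c) (mul b d))].

Definition simple_on (T : Type) (P : T -> Prop) (add mul : T -> T -> T) : Prop :=
  forall r, congruence_on P add mul r ->
    (forall x y, P x -> P y -> r x y -> x = y) \/
    (forall x y, P x -> P y -> r x y).

(* t is the greatest element w.r.t. x <= y :<-> x + y = y *)
Definition greatest_on (T : Type) (P : T -> Prop) (add : T -> T -> T) (t : T) :=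
  P t /\ forall x, P x -> add x t = t.

Definition right_absorbing_on (T : Type) (P : T -> Prop) (mul : T -> T -> T) (r : T) :=
  forall s, P s -> mul s r = r.

Definition left_absorbing_on (T : Type) (P : T -> Prop) (mul : T -> T -> T) (r : T) :=
  forall s, P s -> mul r s = r.

Definition top_left_not_right_on (T : Type) (P : T -> Prop) (add mul : T -> T -> T) :=
  exists t, [/\ greatest_on P add t, left_absorbing_on P mul t &
                ~ right_absorbing_on P mul t].

Section JM.
Context {d : Order.disp_t} {L : finTJoinSemilatticeType d}.

Definition is_jm (f : {ffun L -> L}) : Prop :=
  forall x y, f (x `|` y) = f x `|` f y.

Definition jm_join (f g : {ffun L -> L}) : {ffun L -> L} := [ffun x => f x `|` g x].
Definition jm_comp (f g : {ffun L -> L}) : {ffun L -> L} := [ffun x => f (g x)].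
Definition kconst (a : L) : {ffun L -> L} := [ffun=> a].

Definition jm_subsemiring (R : {set {ffun L -> L}}) : Prop :=
  [/\ R != set0,
      (forall f, f \in R -> is_jm f) &
      (forall f g, f \in R -> g \in R -> jm_join f g \in R /\ jm_comp f g \in R)].

Definition cond_i (R : {set {ffun L -> L}}) : Prop := forall a : L, kconst a \in R.
Definition cond_ii (R : {set {ffun L -> L}}) : Prop :=
  forall f, f \in R -> exists a : L, forall x, a <= f x.
Definition cond_iii (R : {set {ffun L -> L}}) : Prop :=
  forall a b : L, b != \top -> exists2 f, f \in R &
    forall x, (x <= a -> f x = b) /\ (~~ (x <= a) -> b < f x).

Definition good_R (R : {set {ffun L -> L}}) : Prop :=
  [/\ jm_subsemiring R, cond_i R, cond_ii R & cond_iii R].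
End JM.

From Stdlib Require Import Classical Setoid.
From HB Require Import structures.
From mathcomp Require Import all_boot all_order.
Set Implicit Arguments. Unset Strict Implicit. Unset Printing Implicit Defensive.
Import Order.TTheory.
Local Open Scope order_scope.

(* Forward: a congruence relating two distinct maps relates two constants
   [k_p], [k_q] with [p < q] (evaluate both maps, then join).  Composing with the
   map of condition (iii) for [a := p] lifts any [k_b], [b <> 1], strictly inside
   its class, so all constants and then, by (ii), all of [R] are related to [k_1].
   Converse: the left zeros [c = c w] of [S] form a join-semilattice with top [w],
   and [s] acts on it by left multiplication.  Simplicity makes this action
   faithful and forces two auxiliary congruences to be trivial: "both elements are
   bounded below on the left zeros" is not the identity, hence full, giving (ii);
   "[u s c <= B] iff [u t c <= B] for all [u] and left zeros [c]" is not full,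
   hence the identity, so any [c] not below [a] is separated from [a] by some [u]
   with [u a <= B < u c]; the sum of [B] and of all [u] with [u a <= B] then
   realizes (iii). *)

Section CongruenceOn.
Variables (T : Type) (P : T -> Prop) (add mul : T -> T -> T) (r : T -> T -> Prop).
Hypothesis Hr : congruence_on P add mul r.

Lemma congr_on_refl x : P x -> r x x.
Proof. by case: Hr => refl _ _ _; apply: refl. Qed.

Lemma congr_on_sym x y : P x -> P y -> r x y -> r y x.
Proof. by case: Hr => _ sym _ _; apply: sym. Qed.

Lemma congr_on_trans y x z : P x -> P y -> P z -> r x y -> r y z -> r x z.
Proof. by case: Hr => _ _ trans _ Px Py; apply: trans. Qed.

Lemma congr_on_add a b c e : P a -> P b -> P c -> P e ->
  r a b -> r c e -> r (add a c) (add b e).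
Proof. by case: Hr => _ _ _ comp Pa Pb Pc Pe rab rce; case: (comp a b c e). Qed.

Lemma congr_on_mul a b c e : P a -> P b -> P c -> P e ->
  r a b -> r c e -> r (mul a c) (mul b e).
Proof. by case: Hr => _ _ _ comp Pa Pb Pc Pe rab rce; case: (comp a b c e). Qed.
End CongruenceOn.

Section Forward.
Context {d : Order.disp_t} {L : finTJoinSemilatticeType d}.
Implicit Types (f g : {ffun L -> L}) (a b : L).

Lemma jm_comp_kconst f a : jm_comp f (kconst a) = kconst (f a).
Proof. by apply/ffunP=> x; rewrite !ffunE. Qed.

Lemma jm_join_kconst a b : jm_join (kconst a) (kconst b) = kconst (a `|` b).
Proof. by apply/ffunP=> x; rewrite !ffunE. Qed.

Lemma kconst_inj : injective (@kconst _ L).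
Proof. by move=> a b /ffunP/(_ a); rewrite !ffunE. Qed.

Lemma jm_joinxx f : jm_join f f = f.
Proof. by apply/ffunP=> x; rewrite ffunE joinxx. Qed.

Lemma exists_neq_top : (1 < #|L|)%N -> exists a : L, a != \top.
Proof.
case/card_gt1P=> x [y [_ _ xy]].
by case: (eqVneq x \top) => [ex|]; [exists y; rewrite -ex eq_sym | exists x].
Qed.

Variable R : {set {ffun L -> L}}.
Hypothesis HR : good_R R.

Local Notation inR := (fun f : {ffun L -> L} => f \in R).

Lemma good_R_kconst a : kconst a \in R.
Proof. by case: HR => _ Hi _ _; apply: Hi. Qed.

Lemma good_R_join f g : f \in R -> g \in R -> jm_join f g \in R.
Proof. by case: HR => -[_ _ Hcl] _ _ _ Rf Rg; case: (Hcl f g). Qed.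

Lemma good_R_comp f g : f \in R -> g \in R -> jm_comp f g \in R.
Proof. by case: HR => -[_ _ Hcl] _ _ _ Rf Rg; case: (Hcl f g). Qed.

Lemma good_R_semiring : semiring_on inR jm_join jm_comp.
Proof.
case: HR => -[_ Hjm _] _ _ _; split.
- by exists (kconst \top); apply: good_R_kconst.
- by move=> f g Rf Rg; split; [apply: good_R_join | apply: good_R_comp].
- by move=> f g h _ _ _; split; apply/ffunP=> x; rewrite !ffunE ?joinA.
- by move=> f g _ _; apply/ffunP=> x; rewrite !ffunE joinC.
- by move=> f g h Rf _ _; split; apply/ffunP=> x; rewrite !ffunE ?Hjm.
Qed.

Lemma good_R_top_left_not_right : (1 < #|L|)%N ->
  top_left_not_right_on inR jm_join jm_comp.
Proof.
move=> HL; exists (kconst \top); split.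
- split=> [|f _]; first exact: good_R_kconst.
  by apply/ffunP=> x; rewrite !ffunE joinx1.
- by move=> f _; apply/ffunP=> x; rewrite !ffunE.
- case: (exists_neq_top HL) => a /eqP a_ntop /(_ _ (good_R_kconst a)).
  by rewrite jm_comp_kconst ffunE => /kconst_inj.
Qed.

Section Congruence.
Variable r : {ffun L -> L} -> {ffun L -> L} -> Prop.
Hypothesis Hr : congruence_on inR jm_join jm_comp r.

Let Rk := good_R_kconst.

Lemma congr_kconst_app f a b : f \in R ->
  r (kconst a) (kconst b) -> r (kconst (f a)) (kconst (f b)).
Proof.
move=> Rf rab; rewrite -!jm_comp_kconst.
exact: (congr_on_mul Hr Rf Rf (Rk a) (Rk b) (congr_on_refl Hr Rf) rab).
Qed.

Lemma congr_kconst_eval f g x : f \in R -> g \in R ->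
  r f g -> r (kconst (f x)) (kconst (g x)).
Proof.
move=> Rf Rg rfg; rewrite -!jm_comp_kconst.
exact: (congr_on_mul Hr Rf Rg (Rk x) (Rk x) rfg (congr_on_refl Hr (Rk x))).
Qed.

Lemma congr_kconst_joinl a b :
  r (kconst a) (kconst b) -> r (kconst a) (kconst (a `|` b)).
Proof.
move=> rab; rewrite -jm_join_kconst -{1}[kconst a]jm_joinxx.
exact: (congr_on_add Hr (Rk a) (Rk a) (Rk a) (Rk b) (congr_on_refl Hr (Rk a)) rab).
Qed.

Lemma congr_neq_kconst_lt f g : f \in R -> g \in R -> r f g -> f <> g ->
  exists p q : L, p < q /\ r (kconst p) (kconst q).
Proof.
move=> Rf Rg rfg /eqP nfg.
have [x fgx] : exists x, f x != g x.
  case: (pickP (fun x => f x != g x)) => [x|fg]; first by exists x.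
  by case/eqP: nfg; apply/ffunP=> x; apply/eqP/negbFE/fg.
have rfxgx := congr_kconst_eval x Rf Rg rfg.
have rgxfx := congr_on_sym Hr (Rk _) (Rk _) rfxgx.
case: (eqVneq (f x) (f x `|` g x)) => [fxE|fxN].
- exists (g x), (f x `|` g x); split; last first.
    by rewrite joinC; apply: congr_kconst_joinl.
  by rewrite lt_def leUr andbT -fxE.
- exists (f x), (f x `|` g x); split; last exact: congr_kconst_joinl.
  by rewrite lt_def leUl andbT eq_sym.
Qed.

Variables p q : L.
Hypotheses (pq : p < q) (rpq : r (kconst p) (kconst q)).

(* The function of condition (iii) for [a := p] maps [p] to [b] and [q] above [b]. *)
Lemma congr_kconst_climb b : b != \top ->
  exists2 b', b < b' & r (kconst b) (kconst b').
Proof.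
move=> b_ntop; case: HR => _ _ _ /(_ p b b_ntop) [f Rf fE].
exists (f q); first by case: (fE q) => _ ->; rewrite // lt_geF.
by case: (fE p) => /(_ (lexx p)) <- _; apply: congr_kconst_app.
Qed.

Lemma congr_kconst_top b : r (kconst b) (kconst \top).
Proof.
have [n] := ubnP #|[set y | b < y]|; elim: n b => // n IH b.
rewrite ltnS => card_b.
case: (eqVneq b \top) => [->|b_ntop]; first exact: (congr_on_refl Hr).
case: (congr_kconst_climb b_ntop) => b' bb' rbb'.
apply: (congr_on_trans Hr) (Rk _) (Rk _) (Rk _) rbb' (IH _ _).
apply: leq_trans card_b; apply: proper_card; apply/properP; split.
  by apply/subsetP=> y; rewrite !inE; apply: lt_trans.
by exists b'; rewrite !inE ?ltxx.
Qed.

(* Condition (ii) writes [f] as [f \/ k_a], which is related to [f \/ k_top = k_top]. *)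
Lemma congr_top f : f \in R -> r f (kconst \top).
Proof.
move=> Rf; case: HR => _ _ /(_ f Rf) [a fa] _.
have -> : kconst \top = jm_join f (kconst \top).
  by apply/ffunP=> x; rewrite !ffunE joinx1.
rewrite -{1}[f](_ : jm_join f (kconst a) = f); last first.
  by apply/ffunP=> x; rewrite !ffunE; apply: join_l.
apply: (congr_on_add Hr) => //; first exact: (congr_on_refl Hr).
exact: congr_kconst_top.
Qed.
End Congruence.

Lemma good_R_simple : simple_on inR jm_join jm_comp.
Proof.
move=> r Hr.
case: (classic (forall f g, f \in R -> g \in R -> r f g -> f = g)) => [|nid];
  [by left | right].
have [f [g [Rf Rg rfg nfg]]] : exists f g, [/\ f \in R, g \in R, r f g & f <> g].
  apply: NNPP => none; apply: nid => f g Rf Rg rfg.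
  by apply: NNPP => nfg; apply: none; exists f, g.
have [p [q [pq rpq]]] := congr_neq_kconst_lt Hr Rf Rg rfg nfg.
move=> f' g' Rf' Rg'; have Rtop := good_R_kconst \top.
apply: (congr_on_trans Hr Rf' Rtop Rg' (congr_top Hr pq rpq Rf')).
exact: (congr_on_sym Hr Rg' Rtop (congr_top Hr pq rpq Rg')).
Qed.
End Forward.

Record ai_ltop_semiring (S : Type) (add mul : S -> S -> S) (w : S) : Prop :=
  AILTopSemiring {
    addA : associative add;
    addC : commutative add;
    addxx : forall x, add x x = x;
    mulA : associative mul;
    mulDl : left_distributive mul add;
    mulDr : right_distributive mul add;
    addxT : forall x, add x w = w;
    mulTx : left_zero w mul }.

Lemma ai_ltop_semiring_on (S : Type) (add mul : S -> S -> S) (w : S) :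
  semiring_on (fun _ => True) add mul -> add_idempotent_on (fun _ => True) add ->
  greatest_on (fun _ => True) add w -> left_absorbing_on (fun _ => True) mul w ->
  ai_ltop_semiring add mul w.
Proof.
move=> [_ _ assoc comm distr] idem [_ top] labs; split.
- by move=> x y z; case: (assoc x y z).
- by move=> x y; apply: comm.
- by move=> x; apply: idem.
- by move=> x y z; case: (assoc x y z).
- by move=> x y z; case: (distr x y z).
- by move=> x y z; case: (distr x y z).
- by move=> x; apply: top.
- by move=> x; apply: labs.
Qed.

Section AISemiring.
Variables (S : Type) (add mul : S -> S -> S) (w : S).
Hypothesis H : ai_ltop_semiring add mul w.

Definition sle x y := add x y = y.

Lemma sle_refl x : sle x x.
Proof. exact: addxx H x. Qed.

Lemma sle_trans y x z : sle x y -> sle y z -> sle x z.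
Proof. by rewrite /sle => xy <-; rewrite (addA H) xy. Qed.

Lemma sle_anti x y : sle x y -> sle y x -> x = y.
Proof. by rewrite /sle => xy <-; rewrite (addC H) xy. Qed.

Lemma sle_addl x y : sle x (add x y).
Proof. by rewrite /sle (addA H) (addxx H). Qed.

Lemma sle_addr x y : sle y (add x y).
Proof. by rewrite (addC H); apply: sle_addl. Qed.

Lemma sle_addP x y z : sle (add x y) z <-> sle x z /\ sle y z.
Proof.
split=> [xyz|[xz yz]]; last by rewrite /sle -(addA H) yz.
by split; apply: sle_trans xyz; [apply: sle_addl | apply: sle_addr].
Qed.

Lemma sle_mul2l u x y : sle x y -> sle (mul u x) (mul u y).
Proof. by rewrite /sle => xy; rewrite -(mulDr H) xy. Qed.

Lemma sle_topE x : sle w x -> x = w.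
Proof. by rewrite /sle (addC H) (addxT H). Qed.

Lemma left_zero_mull s c : left_zero c mul -> left_zero (mul s c) mul.
Proof. by move=> c0 x; rewrite -(mulA H) c0. Qed.

Lemma left_zero_add c e : left_zero c mul -> left_zero e mul -> left_zero (add c e) mul.
Proof. by move=> c0 e0 x; rewrite (mulDl H) c0 e0. Qed.
End AISemiring.

(* Since [w] is left absorbing, [c w = c] already makes [c] a left zero; the
   left zeros are thus the set [S w], on which [S] acts by left multiplication. *)
Definition lzero (S : finType) (add mul : S -> S -> S) (w : S)
  (H : ai_ltop_semiring add mul w) : Type := {c : S | mul c w == c}.

HB.instance Definition _ (S : finType) (add mul : S -> S -> S) (w : S)
  (H : ai_ltop_semiring add mul w) := Finite.copy (lzero H) {c : S | mul c w == c}.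

Section LZeroOrder.
Variables (S : finType) (add mul : S -> S -> S) (w : S).
Hypothesis H : ai_ltop_semiring add mul w.

Lemma left_zeroP c : reflect (left_zero c mul) (mul c w == c).
Proof.
by apply: (iffP eqP) => [cw s|/(_ w)//]; rewrite -cw -(mulA H) (mulTx H).
Qed.

Definition lzero_le (x y : lzero H) := add (val x) (val y) == val y.

Lemma lzero_le_refl : reflexive lzero_le.
Proof. by move=> x; apply/eqP/(sle_refl H). Qed.

Lemma lzero_le_anti : antisymmetric lzero_le.
Proof. by move=> x y /andP[/eqP xy /eqP yx]; apply/val_inj/(sle_anti H). Qed.

Lemma lzero_le_trans : transitive lzero_le.
Proof. by move=> y x z /eqP xy /eqP yz; apply/eqP/(sle_trans H xy yz). Qed.
End LZeroOrder.

HB.instance Definition _ (S : finType) (add mul : S -> S -> S) (w : S)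
  (H : ai_ltop_semiring add mul w) :=
  Order.Le_isPOrder.Build (Order.Disp tt tt) (lzero H)
    (lzero_le_refl (H := H)) (lzero_le_anti (H := H)) (lzero_le_trans (H := H)).

Section LZeroJoin.
Variables (S : finType) (add mul : S -> S -> S) (w : S).
Hypothesis H : ai_ltop_semiring add mul w.
Local Notation L := (lzero H).

Lemma lzero_val (x : L) : left_zero (val x) mul.
Proof. exact/(left_zeroP H)/(valP x). Qed.

Definition lzero_join (x y : L) : L :=
  exist _ (add (val x) (val y))
      (introT (left_zeroP H _) (left_zero_add H (lzero_val x) (lzero_val y))).

Lemma lzero_joinC : commutative lzero_join.
Proof. by move=> x y; apply: val_inj; rewrite /= (addC H). Qed.

Lemma lzero_joinA : associative lzero_join.
Proof. by move=> x y z; apply: val_inj; rewrite /= (addA H). Qed.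

Lemma lzero_leEjoin (x y : L) : (y <= x) = (lzero_join x y == x).
Proof. by rewrite -(inj_eq val_inj) /= (addC H). Qed.

Definition lzero_top : L := exist _ w (introT (left_zeroP H _) (mulTx H)).

Lemma lzero_lex1 (x : L) : x <= lzero_top.
Proof. exact/eqP/(addxT H). Qed.
End LZeroJoin.

HB.instance Definition _ (S : finType) (add mul : S -> S -> S) (w : S)
  (H : ai_ltop_semiring add mul w) :=
  Order.POrder_Join_isSemilattice.Build (Order.Disp tt tt) (lzero H)
    (lzero_joinC (H := H)) (lzero_joinA (H := H)) (lzero_leEjoin (H := H)).

HB.instance Definition _ (S : finType) (add mul : S -> S -> S) (w : S)
  (H : ai_ltop_semiring add mul w) :=
  Order.hasTop.Build (Order.Disp tt tt) (lzero H) (lzero_lex1 (H := H)).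

Section LeftMultiplication.
Variables (S : finType) (add mul : S -> S -> S) (w : S).
Hypothesis H : ai_ltop_semiring add mul w.
Local Notation L := (lzero H).

Lemma val_lzero_join (x y : L) : val (x `|` y) = add (val x) (val y).
Proof. by []. Qed.

Lemma lzero_leP (x y : L) : reflect (sle add (val x) (val y)) (x <= y).
Proof. exact: eqP. Qed.

Definition to_lzero (c : S) : L := insubd (\top : L) c.

Lemma to_lzeroK c : left_zero c mul -> val (to_lzero c) = c.
Proof. by move=> c0; rewrite val_insubd c0 eqxx. Qed.

Definition lmul (s : S) : {ffun L -> L} := [ffun x => to_lzero (mul s (val x))].

Lemma lmulE s x : val (lmul s x) = mul s (val x).
Proof. by rewrite ffunE to_lzeroK //; apply/(left_zero_mull H)/lzero_val. Qed.

Lemma lmulD s t : lmul (add s t) = jm_join (lmul s) (lmul t).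
Proof.
by apply/ffunP=> x; apply: val_inj; rewrite lmulE ffunE val_lzero_join !lmulE (mulDl H).
Qed.

Lemma lmulM s t : lmul (mul s t) = jm_comp (lmul s) (lmul t).
Proof. by apply/ffunP=> x; apply: val_inj; rewrite lmulE ffunE !lmulE (mulA H). Qed.

Lemma lmul_jm s : is_jm (lmul s).
Proof. by move=> x y; apply: val_inj; rewrite val_lzero_join !lmulE (mulDr H). Qed.

Lemma lmul_left_zero c : left_zero c mul -> lmul c = kconst (to_lzero c).
Proof.
by move=> c0; apply/ffunP=> x; apply: val_inj; rewrite lmulE ffunE c0 to_lzeroK.
Qed.

Definition lmul_set : {set {ffun L -> L}} := [set lmul s | s : S].

Lemma lmul_setP f : f \in lmul_set <-> exists s, lmul s = f.
Proof. by split=> [/imsetP[s _ ->]|[s <-]]; [exists s | apply: imset_f]. Qed.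

Lemma lmul_set_subsemiring : jm_subsemiring lmul_set.
Proof.
split=> [|f /lmul_setP[s <-]|f g /lmul_setP[s <-] /lmul_setP[t <-]].
- by apply/set0Pn; exists (lmul w); apply/lmul_setP; exists w.
- exact: lmul_jm.
- split; apply/lmul_setP; first by exists (add s t); rewrite lmulD.
  by exists (mul s t); rewrite lmulM.
Qed.

Lemma lmul_set_kconst : cond_i lmul_set.
Proof.
move=> a; apply/lmul_setP; exists (val a); rewrite lmul_left_zero; last exact: lzero_val.
by congr kconst; apply/val_inj/to_lzeroK/lzero_val.
Qed.
End LeftMultiplication.

Section SimpleSemiring.
Variables (S : finType) (add mul : S -> S -> S) (w : S).
Hypothesis H : ai_ltop_semiring add mul w.
Hypothesis simple : simple_on (fun _ : S => True) add mul.
Hypothesis not_rabs : exists s, mul s w <> w.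
Local Notation L := (lzero H).
Local Notation sle := (sle add).

Lemma simple_congruence (r : S -> S -> Prop) :
  (forall x, r x x) -> (forall x y, r x y -> r y x) ->
  (forall x y z, r x y -> r y z -> r x z) ->
  (forall a b c e, r a b -> r c e -> r (add a c) (add b e) /\ r (mul a c) (mul b e)) ->
  (forall x y, r x y -> x = y) \/ (forall x y, r x y).
Proof.
move=> refl sym trans comp; case: (simple (r := r)) => [|id|full].
- split=> [x _|x y _ _|x y z _ _ _|a b c e _ _ _ _];
    [exact: refl | exact: sym | exact: trans | exact: comp].
- by left=> x y; apply: id.
- by right=> x y; apply: full.
Qed.

Lemma exists_left_zero_neq_top : exists2 c, left_zero c mul & c <> w.
Proof.
case: not_rabs => s sw; exists (mul s w) => //.
exact/(left_zero_mull H)/(mulTx H).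
Qed.

Lemma lmul_inj : injective (lmul H).
Proof.
pose r s t := forall c, left_zero c mul -> mul s c = mul t c.
case: (@simple_congruence r) => [//|x y xy c c0|x y z xy yz c c0|a b c e ab ce|id|full].
- by rewrite xy.
- by rewrite xy // yz.
- split=> x x0; first by rewrite !(mulDl H) ab // ce.
  by rewrite -!(mulA H) ce // ab //; apply: (left_zero_mull H).
- move=> s t st; apply: id => c c0.
  by rewrite -(to_lzeroK H c0) -!lmulE st.
- case: exists_left_zero_neq_top => c c0; case.
  by have := full c w w (mulTx H); rewrite c0 (mulTx H).
Qed.

Lemma card_lzero_gt1 : (1 < #|(L : finType)|)%N.
Proof.
case: exists_left_zero_neq_top => c c0 cw; apply/card_gt1P.
exists (to_lzero H c), \top; split=> //.
by apply/eqP => /(congr1 val); rewrite (to_lzeroK H c0).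
Qed.

Definition bounded_below s :=
  exists2 a, left_zero a mul & forall c, left_zero c mul -> sle a (mul s c).

Lemma bounded_below_addl s t : bounded_below s -> bounded_below (add s t).
Proof.
case=> a a0 sa; exists a => // c c0; rewrite (mulDl H).
exact: (sle_trans H (sa c c0) (sle_addl H _ _)).
Qed.

Lemma bounded_below_addr s t : bounded_below t -> bounded_below (add s t).
Proof. by rewrite (addC H); apply: bounded_below_addl. Qed.

Lemma bounded_below_mull s t : bounded_below s -> bounded_below (mul s t).
Proof.
case=> a a0 sa; exists a => // c c0; rewrite -(mulA H).
by apply/sa/(left_zero_mull H).
Qed.

Lemma bounded_below_mulr s t : bounded_below t -> bounded_below (mul s t).
Proof.
case=> a a0 ta; exists (mul s a); first exact: (left_zero_mull H).
by move=> c c0; rewrite -(mulA H); apply/(sle_mul2l H)/ta.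
Qed.

Lemma bounded_below_left_zero c : left_zero c mul -> bounded_below c.
Proof. by move=> c0; exists c => // e _; rewrite c0; apply: (sle_refl H). Qed.

(* Relating all bounded-below elements is a congruence, and it is not the identity
   since it relates the distinct left zeros [c] and [w]. *)
Lemma bounded_belowT s : bounded_below s.
Proof.
pose r s t := s = t \/ (bounded_below s /\ bounded_below t).
case: (@simple_congruence r) => [x|x y|x y z|a b c e|id|full].
- by left.
- by case=> [->|[]]; [left|right].
- by case=> [->|[x0 y0]] // [<-|[_ z0]]; right.
- case=> [<-|[a0 b0]] [<-|[c0 e0]].
  + by split; left.
  + by split; right; split; apply: bounded_below_addr || apply: bounded_below_mulr.
  + by split; right; split; apply: bounded_below_addl || apply: bounded_below_mull.
  + by split; right; split; apply: bounded_below_addl || apply: bounded_below_mull.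
- case: exists_left_zero_neq_top => c c0; case; apply: id; right.
  by split; apply: bounded_below_left_zero => //; apply: (mulTx H).
- case: (full s w) => [->|[] //]; exact/bounded_below_left_zero/(mulTx H).
Qed.

Lemma lmul_set_lbound : cond_ii (lmul_set H).
Proof.
move=> f /lmul_setP[s <-]; case: (bounded_belowT s) => a a0 sa.
exists (to_lzero H a) => x; apply/lzero_leP.
by rewrite lmulE (to_lzeroK H a0); apply/sa/lzero_val.
Qed.

Hypothesis card_S : (2 < #|S|)%N.

Section Separation.
Variable B : S.
Hypotheses (B0 : left_zero B mul) (B_ntop : B <> w).

Definition agree_below s t := forall u c, left_zero c mul ->
  (sle (mul u (mul s c)) B <-> sle (mul u (mul t c)) B).

(* Otherwise [sle (s w) B] would define a congruence with only the two classes of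
   [B] and [w], which is impossible as [|S| > 2]. *)
Lemma agree_below_not_full : ~ (forall s t, agree_below s t).
Proof.
move=> full.
have absorb a c : sle (mul (mul a c) w) B <-> sle (mul a w) B.
  have := full (mul c w) w a w (mulTx H).
  by rewrite (left_zero_mull H c (mulTx H)) (mulTx H) (mulA H).
pose r s t := sle (mul s w) B <-> sle (mul t w) B.
case: (@simple_congruence r) => [x|x y|x y z|a b c e|id|full_r].
- by [].
- by rewrite /r; tauto.
- by rewrite /r; tauto.
- rewrite /r => ab ce; split; last by rewrite !absorb.
  by rewrite !(mulDl H) !(sle_addP H); tauto.
- have BorT s : s = B \/ s = w.
    have [sB|sB] := eqVneq (add (mul s w) B) B; [left|right]; apply: id.
    + by rewrite /r B0; split=> // _; apply: (sle_refl H).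
    + rewrite /r (mulTx H); split=> [sB'|/(sle_topE H)/B_ntop //].
      by rewrite sB' eqxx in sB.
  have sub : [set: S] \subset [set B; w].
    by apply/subsetP=> s _; rewrite !inE; case: (BorT s) => ->; rewrite eqxx ?orbT.
  move: card_S; rewrite -cardsT ltnNge => /negP; apply.
  by rewrite (leq_trans (subset_leq_card sub)) // cards2 ltnS leq_b1.
- have := full_r B w; rewrite /r (mulTx H) B0 => /iffLR/(_ (sle_refl H B)).
  by move/(sle_topE H).
Qed.

Lemma agree_below_eq s t : agree_below s t -> s = t.
Proof.
move=> st; case: (@simple_congruence agree_below) => [x|x y|x y z|a b c e|id|full].
- by [].
- by move=> xy u c c0; have := xy u c c0; tauto.
- by move=> xy yz u c c0; have := xy u c c0; have := yz u c c0; tauto.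
- move=> ab ce; split=> u x x0.
  + by rewrite !(mulDl H) !(mulDr H) !(sle_addP H) ab // ce.
  + have := ab u (mul c x) (left_zero_mull H c x0).
    have := ce (mul u b) x x0.
    rewrite -!(mulA H); tauto.
- exact: id.
- by case: agree_below_not_full.
Qed.

Lemma separating_multiplier A y : left_zero A mul -> left_zero y mul -> ~ sle y A ->
  exists u, sle (mul u A) B /\ ~ sle (mul u y) B.
Proof.
move=> A0 y0 yA.
have nagree : ~ agree_below A (add A y).
  by move/agree_below_eq=> AE; apply: yA; rewrite AE; apply: (sle_addr H).
apply: NNPP => none; apply: nagree => u c c0.
rewrite A0 (left_zero_add H A0 y0) (mulDr H) (sle_addP H).
split=> [uA|[] //]; split=> //.
by apply: NNPP => uy; apply: none; exists u.
Qed.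

Variable A : S.

Definition below_multipliers := [seq u <- enum S | add (mul u A) B == B].

(* Left multiplication by this element is the function of condition (iii). *)
Definition step_elt := foldr add B below_multipliers.

Lemma step_elt_ge x : sle B (mul step_elt x).
Proof.
rewrite /step_elt; elim: below_multipliers => [|u l IH] /=.
  by rewrite B0; apply: (sle_refl H).
by rewrite (mulDl H); apply: (sle_trans H IH (sle_addr H _ _)).
Qed.

Lemma step_elt_mem u x : u \in below_multipliers -> sle (mul u x) (mul step_elt x).
Proof.
rewrite /step_elt; elim: below_multipliers => [|v l IH] //=; rewrite inE (mulDl H).
case/orP=> [/eqP ->|ul]; first exact: (sle_addl H).
exact: (sle_trans H (IH ul) (sle_addr H _ _)).
Qed.

Lemma step_elt_le x : sle x A -> sle (mul step_elt x) B.
Proof.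
move=> xA; rewrite /step_elt.
have : forall u, u \in below_multipliers -> sle (mul u A) B.
  by move=> u; rewrite mem_filter => /andP[/eqP].
elim: below_multipliers => [|u l IH] uAB /=; first by rewrite B0; apply: (sle_refl H).
rewrite (mulDl H) (sle_addP H); split.
  exact: (sle_trans H (sle_mul2l H u xA) (uAB u (mem_head u l))).
by apply: IH => v vl; apply: uAB; rewrite inE vl orbT.
Qed.
End Separation.

Lemma lmul_set_step : cond_iii (lmul_set H).
Proof.
move=> a b b_ntop; have b0 := lzero_val b.
have bw : val b <> w by move=> bw; case/eqP: b_ntop; apply: val_inj.
exists (lmul H (step_elt (val b) (val a))); first by apply/lmul_setP; eexists.
move=> x; split=> [/lzero_leP xa|xa].
  apply: val_inj; rewrite lmulE.
  by apply: (sle_anti H); [apply: step_elt_le | apply: step_elt_ge].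
rewrite lt_def; apply/andP; split; last first.
  by apply/lzero_leP; rewrite lmulE; apply: step_elt_ge.
apply/negP=> /eqP/(congr1 val); rewrite lmulE => xE.
have nxa : ~ sle (val x) (val a) by move/lzero_leP=> xa'; rewrite xa' in xa.
have [u [uA ux]] := separating_multiplier b0 bw (lzero_val a) (lzero_val x) nxa.
apply: ux; rewrite -xE; apply: step_elt_mem.
by rewrite mem_filter mem_enum andbT; apply/eqP.
Qed.

Lemma lmul_set_good : good_R (lmul_set H).
Proof.
split; [exact: lmul_set_subsemiring | exact: lmul_set_kconst | | exact: lmul_set_step].
exact: lmul_set_lbound.
Qed.
End SimpleSemiring.

Theorem theorem5p3 :
  (forall (d : Order.disp_t) (L : finTJoinSemilatticeType d)
          (R : {set {ffun L -> L}}),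
      (1 < #|L|)%N -> good_R R ->
      let P := fun f => f \in R in
      [/\ semiring_on P jm_join jm_comp,
          add_idempotent_on P jm_join,
          simple_on P jm_join jm_comp &
          top_left_not_right_on P jm_join jm_comp]) /\
  (forall (S : finType) (add mul : S -> S -> S),
      let P := fun _ : S => True in
      semiring_on P add mul -> add_idempotent_on P add ->
      simple_on P add mul -> (2 < #|S|)%N ->
      top_left_not_right_on P add mul ->
      exists (d : Order.disp_t) (L : finTJoinSemilatticeType d)
             (R : {set {ffun L -> L}}) (phi : S -> {ffun L -> L}),
        [/\ (1 < #|L|)%N, good_R R, injective phi &
            (forall f, f \in R <-> exists s, phi s = f)] /\
        [/\ 
            (forall s t, phi (add s t) = jm_join (phi s) (phi t)) &
            (forall s t, phi (mul s t) = jm_comp (phi s) (phi t))]).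
Proof.
split=> [d L R HL HR P|S add mul P Hsr idem simple card_S [w [top labs not_rabs]]].
  split; [exact: good_R_semiring | by move=> f _; apply: jm_joinxx |
          exact: good_R_simple | exact: good_R_top_left_not_right].
have H := ai_ltop_semiring_on Hsr idem top labs.
have not_rabs' : exists s, mul s w <> w.
  by apply: NNPP => none; apply: not_rabs => s _; apply: NNPP => sw; apply: none; exists s.
exists (Order.Disp tt tt), (lzero H), (lmul_set H), (lmul H); split; split.
- exact: card_lzero_gt1 not_rabs'.
- exact: lmul_set_good simple not_rabs' card_S.
- exact: lmul_inj simple not_rabs'.
- exact: lmul_setP.
- exact: lmulD.
- exact: lmulM.
Qed.
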